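(* Let $(A,\circ,[\cdot,\cdot])$ be a finite-dimensional dual pre-Poisson algebra and $r\in A\otimes A$. Define linear maps $\delta_{\circ,r},\delta_{[\cdot,\cdot],r}:A\to A\otimes A$ by $$\delta_{\circ,r}(x)=\big(R_{\blacksquare}(x)\otimes\mathrm{id}+\mathrm{id}\otimes R_{\circ}(x)\big)r,\qquad \delta_{[\cdot,\cdot],r}(x)=\big(L_{\square}(x)\otimes\mathrm{id}-\mathrm{id}\otimes R_{[\cdot,\cdot]}(x)\big)r .$$ If $r$ is a symmetric solution of the permutative-Leibniz Yang–Baxter equation (PLYBE) in $(A,\circ,[\cdot,\cdot])$, then $(A,\circ,[\cdot,\cdot],\delta_{\circ,r},\delta_{[\cdot,\cdot],r})$ is a dual pre-Poisson bialgebra.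
   Context: Field $\mathbb{F}$ of characteristic $0$. A dual pre-Poisson algebra $(A,\circ,[\cdot,\cdot])$: $x\circ(y\circ z)=(x\circ y)\circ z=(y\circ x)\circ z$; $[x,[y,z]]=[[x,y],z]+[y,[x,z]]$; $[x,y\circ z]=[x,y]\circ z+y\circ[x,z]$; $[x\circ y,z]=x\circ[y,z]+y\circ[x,z]$; $[x,y]\circ z=-[y,x]\circ z$. For a bilinear operation $\diamond$ write $L_\diamond(x)y=x\diamond y$, $R_\diamond(x)y=y\diamond x$. Put $x\blacksquare y=x\circ y-y\circ x$ and $x\square y=[x,y]+[y,x]$. $\tau$ is the flip $u\otimes v\mapsto v\otimes u$; $r$ symmetric means $\tau(r)=r$. PLYBE: writing $r=\sum_i a_i\otimes b_i$, set $r_{13}\circ r_{23}=\sum_{i,j}a_i\otimes a_j\otimes b_i\circ b_j$, $r_{12}\circ r_{23}=\sum_{i,j}a_i\otimes b_i\circ a_j\otimes b_j$, $r_{13}\blacksquare r_{12}=\sum_{i,j}a_i\blacksquare a_j\otimes b_j\otimes b_i$, $[r_{13},r_{23}]=\sum_{i,j}a_i\otimes a_j\otimes[b_i,b_j]$, $[r_{12},r_{23}]=\sum_{i,j}a_i\otimes[b_i,a_j]\otimes b_j$, $r_{12}\square r_{13}=\sum_{i,j}a_i\square a_j\otimes b_i\otimes b_j$, and $\mathbf{P}(r)=r_{13}\circ r_{23}-r_{12}\circ r_{23}+r_{13}\blacksquare r_{12}$, $\mathbf{L}(r)=[r_{13},r_{23}]+[r_{12},r_{23}]-r_{12}\square r_{13}$.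 $r$ is a solution of the PLYBE if $\mathbf{P}(r)=\mathbf{L}(r)=0$. A dual pre-Poisson bialgebra is $(A,\circ,[\cdot,\cdot],\delta_\circ,\delta_{[\cdot,\cdot]})$ where $(A,\circ,[\cdot,\cdot])$ is a dual pre-Poisson algebra and $\delta_\circ,\delta_{[\cdot,\cdot]}:A\to A\otimes A$ are linear maps satisfying: (coalgebra) $(\mathrm{id}\otimes\delta_\circ)\delta_\circ=(\delta_\circ\otimes\mathrm{id})\delta_\circ=(\tau\otimes\mathrm{id})(\delta_\circ\otimes\mathrm{id})\delta_\circ$; $(\mathrm{id}\otimes\delta_{[\cdot,\cdot]})\delta_{[\cdot,\cdot]}=(\delta_{[\cdot,\cdot]}\otimes\mathrm{id})\delta_{[\cdot,\cdot]}+(\tau\otimes\mathrm{id})(\mathrm{id}\otimes\delta_{[\cdot,\cdot]})\delta_{[\cdot,\cdot]}$; $(\mathrm{id}\otimes\delta_\circ)\delta_{[\cdot,\cdot]}=(\delta_{[\cdot,\cdot]}\otimes\mathrm{id})\delta_\circ+(\tau\otimes\mathrm{id})(\mathrm{id}\otimes\delta_{[\cdot,\cdot]})\delta_\circ$; $(\delta_\circ\otimes\mathrm{id})\delta_{[\cdot,\cdot]}=(\mathrm{id}\otimes\delta_{[\cdot,\cdot]})\delta_\circ+(\tau\otimes\mathrm{id})(\mathrm{id}\otimes\delta_{[\cdot,\cdot]})\delta_\circ$; $(\delta_{[\cdot,\cdot]}\otimes\mathrm{id})\delta_\circ=-(\tau\otimes\mathrm{id})(\delta_{[\cdot,\cdot]}\otimes\mathrm{id})\delta_\circ$;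 and, with $\delta_\blacksquare=\delta_\circ-\tau\delta_\circ$, $\delta_\square=\delta_{[\cdot,\cdot]}+\tau\delta_{[\cdot,\cdot]}$, for all $x,y\in A$: (1) $\delta_\circ(x\circ y)=(L_\blacksquare(x)\otimes\mathrm{id})\delta_\circ(y)+(\mathrm{id}\otimes R_\circ(y))\delta_\circ(x)$; (2) $(\mathrm{id}\otimes R_\circ(x))\tau\delta_\circ(y)=(R_\circ(y)\otimes\mathrm{id})\delta_\circ(x)$; (3) $\delta_\circ(x\circ y)=(L_\blacksquare(y)\otimes\mathrm{id})\delta_\blacksquare(x)+(\mathrm{id}\otimes L_\circ(x))\delta_\circ(y)$; (4) $(\mathrm{id}\otimes R_{[\cdot,\cdot]}(x))\tau\delta_{[\cdot,\cdot]}(y)=(R_{[\cdot,\cdot]}(y)\otimes\mathrm{id})\delta_{[\cdot,\cdot]}(x)$; (5) $\delta_{[\cdot,\cdot]}([x,y])=(\mathrm{id}\otimes R_{[\cdot,\cdot]}(y)-L_\square(y)\otimes\mathrm{id})\delta_\square(x)+(\mathrm{id}\otimes L_{[\cdot,\cdot]}(x)+L_{[\cdot,\cdot]}(x)\otimes\mathrm{id})\delta_{[\cdot,\cdot]}(y)$; (6) $\delta_\circ([x,y])=(\mathrm{id}\otimes L_{[\cdot,\cdot]}(x)+L_{[\cdot,\cdot]}(x)\otimes\mathrm{id})\delta_\circ(y)+(L_\blacksquare(y)\otimes\mathrm{id}-\mathrm{id}\otimes R_\circ(y))\delta_\square(x)$; (7) $\delta_{[\cdot,\cdot]}(x\circ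 y)=(\mathrm{id}\otimes L_\circ(x))\delta_{[\cdot,\cdot]}(y)+(\mathrm{id}\otimes R_\circ(y))\delta_{[\cdot,\cdot]}(x)-(L_\square(x)\otimes\mathrm{id})\delta_\circ(y)-(L_\square(y)\otimes\mathrm{id})\delta_\blacksquare(x)$; (8) $(\mathrm{id}\otimes R_{[\cdot,\cdot]}(x))\tau\delta_\circ(y)=-(R_\circ(y)\otimes\mathrm{id})\delta_{[\cdot,\cdot]}(x)$; (9) $\delta_\circ([x,y])=(\mathrm{id}\otimes L_\circ(x)-L_\circ(x)\otimes\mathrm{id})\delta_{[\cdot,\cdot]}(y)+(\mathrm{id}\otimes R_{[\cdot,\cdot]}(y)-L_\square(y)\otimes\mathrm{id})\delta_\blacksquare(x)$; (10) $\delta_\square(x\circ y)=(\mathrm{id}\otimes L_\circ(x))\delta_\square(y)+(\mathrm{id}\otimes L_\circ(y))\delta_\square(x)-(L_{[\cdot,\cdot]}(x)\otimes\mathrm{id})\delta_\blacksquare(y)-(L_{[\cdot,\cdot]}(y)\otimes\mathrm{id})\delta_\blacksquare(x)$; (11) $\delta_{[\cdot,\cdot]}(x\circ y)=(L_\circ(x)\otimes\mathrm{id})\delta_{[\cdot,\cdot]}(y)-(\mathrm{id}\otimes R_{[\cdot,\cdot]}(y))\delta_\blacksquare(x)+(\mathrm{id}\otimes L_{[\cdot,\cdot]}(x))\delta_\circ(y)-(R_\blacksquare(y)\otimes\mathrm{id})\delta_\square(x)$; (12) $\delta_\circ(x\square y)=(\mathrm{id}\otimes L_\square(x))\delta_\circ(y)+(L_\square(x)\otimes\mathrm{id})\tau\delta_\circ(y)-(\mathrm{id}\otimes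 R_\blacksquare(y))\delta_{[\cdot,\cdot]}(x)-(R_\blacksquare(y)\otimes\mathrm{id})\tau\delta_{[\cdot,\cdot]}(x)$. *)

(* A finite-dimensional algebra over a field F is modelled
   as the coordinate space V := 'rV[F]_n with the standard basis e_i.
   Tensors: A (x) A  ~  'M[F]_n  (entry (i,j) = coefficient of e_i (x) e_j),
            A (x) A (x) A ~ {ffun 'I_n * 'I_n * 'I_n -> F}. *)
From HB Require Import structures.
From mathcomp Require Import all_boot all_order all_algebra.
Set Implicit Arguments. Unset Strict Implicit. Unset Printing Implicit Defensive.
Import Order.TTheory GRing.Theory Num.Theory.
Local Open Scope ring_scope.

Section DPP.
Variables (F : fieldType) (n : nat).
Local Notation V := 'rV[F]_n.
Local Notation T2 := 'M[F]_n.
Local Notation T3 := {ffun 'I_n * 'I_n * 'I_n -> F}.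

Definition ebase (i : 'I_n) : V := delta_mx 0 i.

Definition scale3 (c : F) (f : T3) : T3 := [ffun k => c * f k].

Definition tens2 (u v : V) : T2 := \matrix_(i, j) (u 0 i * v 0 j).
Definition tens3 (u v w : V) : T3 :=
  [ffun ijk : 'I_n * 'I_n * 'I_n => u 0 ijk.1.1 * v 0 ijk.1.2 * w 0 ijk.2].
Definition tensl (u : V) (t : T2) : T3 :=
  [ffun ijk : 'I_n * 'I_n * 'I_n => u 0 ijk.1.1 * t ijk.1.2 ijk.2].
Definition tensr (t : T2) (u : V) : T3 :=
  [ffun ijk : 'I_n * 'I_n * 'I_n => t ijk.1.1 ijk.1.2 * u 0 ijk.2].

Definition tmap (f g : V -> V) (t : T2) : T2 :=
  \sum_(i < n) \sum_(j < n) t i j *: tens2 (f (ebase i)) (g (ebase j)).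
Definition flip (t : T2) : T2 := t^T.
Definition id_tens (d : V -> T2) (t : T2) : T3 :=
  \sum_(i < n) \sum_(j < n) scale3 (t i j) (tensl (ebase i) (d (ebase j))).
Definition tens_id (d : V -> T2) (t : T2) : T3 :=
  \sum_(i < n) \sum_(j < n) scale3 (t i j) (tensr (d (ebase i)) (ebase j)).
Definition flip12 (t : T3) : T3 :=
  [ffun ijk : 'I_n * 'I_n * 'I_n => t ((ijk.1.2, ijk.1.1), ijk.2)].

Definition Lop (op : V -> V -> V) (x : V) : V -> V := fun y => op x y.
Definition Rop (op : V -> V -> V) (x : V) : V -> V := fun y => op y x.
(* x ■ y = x o y - y o x ,  x □ y = [x,y] + [y,x] *)
Definition bsq (mul : V -> V -> V) (x y : V) : V := mul x y - mul y x.
Definition wsq (br : V -> V -> V) (x y : V) : V := br x y + br y x.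

Definition bilinear_op (op : V -> V -> V) : Prop :=
  (forall (a : F) (x y z : V), op (a *: x + y) z = a *: op x z + op y z) /\
  (forall (a : F) (x y z : V), op z (a *: x + y) = a *: op z x + op z y).

Definition dual_pre_poisson (mul br : V -> V -> V) : Prop :=
  bilinear_op mul /\ bilinear_op br /\
  [/\ (forall x y z, mul x (mul y z) = mul (mul x y) z /\
                   mul (mul x y) z = mul (mul y x) z),
    (forall x y z, br x (br y z) = br (br x y) z + br y (br x z)),
    (forall x y z, br x (mul y z) = mul (br x y) z + mul y (br x z)),
    (forall x y z, br (mul x y) z = mul x (br y z) + mul y (br x z)) &
    (forall x y z, mul (br x y) z = - mul (br y x) z)].

Definition PLYBE_P (mul : V -> V -> V) (r : T2) : T3 :=
  \sum_(p < n) \sum_(q < n) \sum_(s < n) \sum_(t < n) scale3 (r p q * r s t)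
    (tens3 (ebase p) (ebase s) (mul (ebase q) (ebase t))
     - tens3 (ebase p) (mul (ebase q) (ebase s)) (ebase t)
     + tens3 (bsq mul (ebase p) (ebase s)) (ebase t) (ebase q)).
Definition PLYBE_L (br : V -> V -> V) (r : T2) : T3 :=
  \sum_(p < n) \sum_(q < n) \sum_(s < n) \sum_(t < n) scale3 (r p q * r s t)
    (tens3 (ebase p) (ebase s) (br (ebase q) (ebase t))
     + tens3 (ebase p) (br (ebase q) (ebase s)) (ebase t)
     - tens3 (wsq br (ebase p) (ebase s)) (ebase q) (ebase t)).
Definition PLYBE_solution (mul br : V -> V -> V) (r : T2) : Prop :=
  PLYBE_P mul r = 0 /\ PLYBE_L br r = 0.

Definition dpp_bialgebra (mul br : V -> V -> V) (dc db : V -> T2) : Prop :=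
  let dbs := fun x => dc x - flip (dc x) in
  let dws := fun x => db x + flip (db x) in
  let idV := fun v : V => v in
  dual_pre_poisson mul br /\
    (forall (a : F) x y, dc (a *: x + y) = a *: dc x + dc y) /\
    (forall (a : F) x y, db (a *: x + y) = a *: db x + db y) /\
    [/\ (forall x, id_tens dc (dc x) = tens_id dc (dc x) /\
                   tens_id dc (dc x) = flip12 (tens_id dc (dc x))),
        (forall x, id_tens db (db x) = tens_id db (db x) + flip12 (id_tens db (db x))),
        (forall x, id_tens dc (db x) = tens_id db (dc x) + flip12 (id_tens db (dc x))),
        (forall x, tens_id dc (db x) = id_tens db (dc x) + flip12 (id_tens db (dc x))) &
        (forall x, tens_id db (dc x) = - flip12 (tens_id db (dc x)))] /\
    ((forall x y, dc (mul x y) =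
           tmap (Lop (bsq mul) x) idV (dc y) + tmap idV (Rop mul y) (dc x)))
    /\ ((forall x y, tmap idV (Rop mul x) (flip (dc y)) = tmap (Rop mul y) idV (dc x)))
    /\ ((forall x y, dc (mul x y) =
           tmap (Lop (bsq mul) y) idV (dbs x) + tmap idV (Lop mul x) (dc y)))
    /\ ((forall x y, tmap idV (Rop br x) (flip (db y)) = tmap (Rop br y) idV (db x)))
    /\ ((forall x y, db (br x y) =
           tmap idV (Rop br y) (dws x) - tmap (Lop (wsq br) y) idV (dws x)
           + (tmap idV (Lop br x) (db y) + tmap (Lop br x) idV (db y))))
    /\ ((forall x y, dc (br x y) =
           tmap idV (Lop br x) (dc y) + tmap (Lop br x) idV (dc y)
           + (tmap (Lop (bsq mul) y) idV (dws x) - tmap idV (Rop mul y) (dws x))))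
    /\ ((forall x y, db (mul x y) =
           tmap idV (Lop mul x) (db y) + tmap idV (Rop mul y) (db x)
           - tmap (Lop (wsq br) x) idV (dc y) - tmap (Lop (wsq br) y) idV (dbs x)))
    /\ ((forall x y, tmap idV (Rop br x) (flip (dc y)) = - tmap (Rop mul y) idV (db x)))
    /\ ((forall x y, dc (br x y) =
           tmap idV (Lop mul x) (db y) - tmap (Lop mul x) idV (db y)
           + (tmap idV (Rop br y) (dbs x) - tmap (Lop (wsq br) y) idV (dbs x))))
    /\ ((forall x y, dws (mul x y) =
           tmap idV (Lop mul x) (dws y) + tmap idV (Lop mul y) (dws x)
           - tmap (Lop br x) idV (dbs y) - tmap (Lop br y) idV (dbs x)))
    /\ ((forall x y, db (mul x y) =
           tmap (Lop mul x) idV (db y) - tmap idV (Rop br y) (dbs x)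
           + tmap idV (Lop br x) (dc y) - tmap (Rop (bsq mul) y) idV (dws x))) /\
    ((forall x y, dc (wsq br x y) =
           tmap idV (Lop (wsq br) x) (dc y) + tmap (Lop (wsq br) x) idV (flip (dc y))
           - tmap idV (Rop (bsq mul) y) (db x)
           - tmap (Rop (bsq mul) y) idV (flip (db x)))).

Definition delta_circ_r (mul : V -> V -> V) (r : T2) (x : V) : T2 :=
  tmap (Rop (bsq mul) x) (fun v => v) r + tmap (fun v => v) (Rop mul x) r.
Definition delta_br_r (br : V -> V -> V) (r : T2) (x : V) : T2 :=
  tmap (Lop (wsq br) x) (fun v => v) r - tmap (fun v => v) (Rop br x) r.

End DPP.

(* The coproducts are delta(x) = (action of x) r, so each condition to check is a
   tensor identity that is linear (compatibility conditions) or quadratic (coalgebra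
   conditions) in r.  Writing r = sum r_pq e_p (x) e_q, it becomes a sum weighted by
   r_pq, resp. r_pq r_st, of an expression in basis vectors, and since r is symmetric
   only the symmetrisation of that expression under p <-> q, resp. under the group of
   order 8 generated by p <-> q, s <-> t and (p,q) <-> (s,t), matters.  The twelve
   compatibility conditions then hold for every symmetric r: after symmetrisation they
   are identities of the free dual pre-Poisson algebra in degree 3.  The five
   coalgebra conditions hold up to an explicit combination of images of P(r) and L(r)
   under the action of x, hence whenever r solves the PLYBE. *)
From HB Require Import structures.
From mathcomp Require Import all_boot all_order all_algebra.
From mathcomp Require Import ring.
Set Implicit Arguments. Unset Strict Implicit. Unset Printing Implicit Defensive.
Import GRing.Theory.
Local Open Scope ring_scope.

Section Tensors.
Variables (F : fieldType) (n : nat).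
Local Notation V := 'rV[F]_n.
Local Notation T2 := 'M[F]_n.
Local Notation T3 := {ffun 'I_n * 'I_n * 'I_n -> F}.

Lemma linear_basis_expand (W : lmodType F) (f : V -> W) (a : V) :
  linear f -> f a = \sum_i a 0 i *: f (ebase F i).
Proof.
move=> lin_f; pose fL : {linear V -> W} := HB.pack f (GRing.isLinear.Build _ _ _ _ f lin_f).
change (fL a = \sum_i a 0 i *: fL (ebase F i)).
by rewrite {1}(row_sum_delta a) linear_sum; apply: eq_bigr => i _; rewrite linearZ.
Qed.

Fact tmap_is_linear (f g : V -> V) : linear (tmap f g).
Proof.
move=> c u v; rewrite /tmap scaler_sumr -big_split; apply: eq_bigr => i _.
by rewrite scaler_sumr -big_split; apply: eq_bigr => j _; rewrite !mxE scalerDl scalerA.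
Qed.
HB.instance Definition _ f g :=
  GRing.isLinear.Build F T2 T2 *:%R (tmap f g) (tmap_is_linear f g).

Fact flip_is_linear : linear (@flip F n).
Proof. by move=> c u v; apply/matrixP => i j; rewrite !mxE. Qed.
HB.instance Definition _ := GRing.isLinear.Build F T2 T2 *:%R (@flip F n) flip_is_linear.

Lemma tmapD (f g : V -> V) t1 t2 : tmap f g (t1 + t2) = tmap f g t1 + tmap f g t2.
Proof. exact: linearD. Qed.
Lemma tmapN (f g : V -> V) t : tmap f g (- t) = - tmap f g t.
Proof. exact: linearN. Qed.
Lemma flipD (t1 t2 : T2) : flip (t1 + t2) = flip t1 + flip t2.
Proof. exact: linearD. Qed.
Lemma flipN (t : T2) : flip (- t) = - flip t.
Proof. exact: linearN. Qed.

Lemma tmap_tens2 (f g : V -> V) (a b : V) : linear f -> linear g ->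
  tmap f g (tens2 a b) = tens2 (f a) (g b).
Proof.
move=> lin_f lin_g; rewrite (linear_basis_expand a lin_f) (linear_basis_expand b lin_g).
apply/matrixP => k l; rewrite /tmap [in RHS]mxE !summxE big_distrl /=.
apply: eq_bigr => i _; rewrite !summxE big_distrr /=; apply: eq_bigr => j _.
by rewrite !mxE; ring.
Qed.

Lemma flip_tens2 (a b : V) : flip (tens2 a b) = tens2 b a.
Proof. by apply/matrixP => i j; rewrite !mxE mulrC. Qed.

Lemma scale31 (t : T3) : scale3 1 t = t.
Proof. by apply/ffunP => k; rewrite ffunE mul1r. Qed.

Lemma scale3A a b (t : T3) : scale3 a (scale3 b t) = scale3 (a * b) t.
Proof. by apply/ffunP => k; rewrite !ffunE mulrA. Qed.

Lemma scale3_sumr I (s : seq I) (P : pred I) (c : F) (G : I -> T3) :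
  scale3 c (\sum_(i <- s | P i) G i) = \sum_(i <- s | P i) scale3 c (G i).
Proof.
apply/ffunP => k; rewrite !ffunE !sum_ffunE mulr_sumr.
by apply: eq_bigr => i _; rewrite ffunE.
Qed.

(* [T3] carries no [lmodType] instance ([F] is not an [lmodType] over itself),
   so linearity of maps [T3 -> T3] is stated with [scale3]. *)
Definition linear3 (M : T3 -> T3) :=
  forall (c : F) (u v : T3), M (scale3 c u + v) = scale3 c (M u) + M v.

Section Linear3.
Variables (M : T3 -> T3) (lin_M : linear3 M).

Lemma linear3D u v : M (u + v) = M u + M v.
Proof. by rewrite -{1}[u]scale31 lin_M scale31. Qed.

Lemma linear3_0 : M 0 = 0.
Proof. by apply: (addrI (M 0)); rewrite -linear3D !addr0. Qed.

Lemma linear3N u : M (- u) = - M u.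
Proof. by apply/eqP; rewrite -subr_eq0 opprK -linear3D addNr linear3_0. Qed.
End Linear3.

Definition tmap3 (f g h : V -> V) (t : T3) : T3 :=
  \sum_(i < n) \sum_(j < n) \sum_(k < n)
     scale3 (t ((i, j), k)) (tens3 (f (ebase F i)) (g (ebase F j)) (h (ebase F k))).
Definition swap23 (t : T3) : T3 := [ffun ijk => t ((ijk.1.1, ijk.2), ijk.1.2)].
Definition cycle3 (t : T3) : T3 := [ffun ijk => t ((ijk.2, ijk.1.1), ijk.1.2)].

Lemma flip12_linear3 : linear3 (@flip12 F n).
Proof. by move=> c u v; apply/ffunP => k; rewrite !ffunE. Qed.
Lemma swap23_linear3 : linear3 swap23.
Proof. by move=> c u v; apply/ffunP => k; rewrite !ffunE. Qed.
Lemma cycle3_linear3 : linear3 cycle3.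
Proof. by move=> c u v; apply/ffunP => k; rewrite !ffunE. Qed.

Lemma tmap3_linear3 f g h : linear3 (tmap3 f g h).
Proof.
move=> c u v; apply/ffunP => ijk; rewrite /tmap3 !ffunE !sum_ffunE big_distrr -big_split.
apply: eq_bigr => i _; rewrite !sum_ffunE big_distrr -big_split; apply: eq_bigr => j _.
rewrite !sum_ffunE big_distrr -big_split; apply: eq_bigr => k _.
by rewrite !ffunE /=; ring.
Qed.

Lemma tmap3D f g h u v : tmap3 f g h (u + v) = tmap3 f g h u + tmap3 f g h v.
Proof. exact/linear3D/tmap3_linear3. Qed.

Lemma tmap3N f g h u : tmap3 f g h (- u) = - tmap3 f g h u.
Proof. exact/linear3N/tmap3_linear3. Qed.

Lemma tmap3_tens3 (f g h : V -> V) (a b c : V) : linear f -> linear g -> linear h ->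
  tmap3 f g h (tens3 a b c) = tens3 (f a) (g b) (h c).
Proof.
move=> lin_f lin_g lin_h; apply/ffunP => ijk.
rewrite [in RHS]ffunE (linear_basis_expand a lin_f) (linear_basis_expand b lin_g).
rewrite (linear_basis_expand c lin_h) !summxE big_distrlr big_distrl /= /tmap3 sum_ffunE.
apply: eq_bigr => i _; rewrite big_distrl /= sum_ffunE; apply: eq_bigr => j _.
rewrite big_distrr /= sum_ffunE; apply: eq_bigr => k _.
by rewrite !ffunE !mxE /=; ring.
Qed.

Fact id_tens_is_additive (d : V -> T2) : zmod_morphism (id_tens d).
Proof.
move=> u v; apply/ffunP => ijk; rewrite /id_tens !ffunE !sum_ffunE -sumrB.
apply: eq_bigr => i _; rewrite !sum_ffunE -sumrB; apply: eq_bigr => j _.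
by rewrite !ffunE !mxE mulrBl.
Qed.
HB.instance Definition _ d :=
  GRing.isZmodMorphism.Build T2 T3 (id_tens d) (id_tens_is_additive d).

Fact tens_id_is_additive (d : V -> T2) : zmod_morphism (tens_id d).
Proof.
move=> u v; apply/ffunP => ijk; rewrite /tens_id !ffunE !sum_ffunE -sumrB.
apply: eq_bigr => i _; rewrite !sum_ffunE -sumrB; apply: eq_bigr => j _.
by rewrite !ffunE !mxE mulrBl.
Qed.
HB.instance Definition _ d :=
  GRing.isZmodMorphism.Build T2 T3 (tens_id d) (tens_id_is_additive d).

Lemma id_tensD (d : V -> T2) t1 t2 : id_tens d (t1 + t2) = id_tens d t1 + id_tens d t2.
Proof. exact: raddfD. Qed.
Lemma id_tensN (d : V -> T2) t : id_tens d (- t) = - id_tens d t.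
Proof. exact: raddfN. Qed.
Lemma tens_idD (d : V -> T2) t1 t2 : tens_id d (t1 + t2) = tens_id d t1 + tens_id d t2.
Proof. exact: raddfD. Qed.
Lemma tens_idN (d : V -> T2) t : tens_id d (- t) = - tens_id d t.
Proof. exact: raddfN. Qed.

Lemma id_tensZ (d : V -> T2) c (t : T2) : id_tens d (c *: t) = scale3 c (id_tens d t).
Proof.
rewrite /id_tens scale3_sumr; apply: eq_bigr => i _; rewrite scale3_sumr.
by apply: eq_bigr => j _; rewrite mxE scale3A.
Qed.

Lemma tens_idZ (d : V -> T2) c (t : T2) : tens_id d (c *: t) = scale3 c (tens_id d t).
Proof.
rewrite /tens_id scale3_sumr; apply: eq_bigr => i _; rewrite scale3_sumr.
by apply: eq_bigr => j _; rewrite mxE scale3A.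
Qed.

Lemma id_tens_tens2 (d : V -> T2) (a b : V) : linear d ->
  id_tens d (tens2 a b) = tensl a (d b).
Proof.
move=> lin_d; apply/ffunP => ijk; rewrite [in RHS]ffunE.
rewrite [in RHS](row_sum_delta a) (linear_basis_expand b lin_d) !summxE big_distrlr /=.
rewrite /id_tens sum_ffunE; apply: eq_bigr => i _; rewrite sum_ffunE; apply: eq_bigr => j _.
by rewrite !ffunE !mxE /=; ring.
Qed.

Lemma tens_id_tens2 (d : V -> T2) (a b : V) : linear d ->
  tens_id d (tens2 a b) = tensr (d a) b.
Proof.
move=> lin_d; apply/ffunP => ijk; rewrite [in RHS]ffunE.
rewrite [in RHS](row_sum_delta b) (linear_basis_expand a lin_d) !summxE big_distrlr /=.
rewrite /tens_id sum_ffunE; apply: eq_bigr => i _; rewrite sum_ffunE; apply: eq_bigr => j _.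
by rewrite !ffunE !mxE /=; ring.
Qed.
End Tensors.

Section Coordinates.
Variables (F : fieldType) (n : nat).
Local Notation V := 'rV[F]_n.
Local Notation T2 := 'M[F]_n.
Local Notation T3 := {ffun 'I_n * 'I_n * 'I_n -> F}.
Implicit Types (u v w : V) (A B : T2) (f g : T3) (i j : 'I_n) (k : 'I_n * 'I_n * 'I_n).

Lemma ffun_addE f g k : (f + g) k = f k + g k. Proof. by rewrite ffunE. Qed.
Lemma ffun_oppE f k : (- f) k = - f k. Proof. by rewrite ffunE. Qed.
Lemma tens3E u v w k : tens3 u v w k = u 0 k.1.1 * v 0 k.1.2 * w 0 k.2.
Proof. by rewrite ffunE. Qed.
Lemma tenslE u A k : tensl u A k = u 0 k.1.1 * A k.1.2 k.2. Proof. by rewrite ffunE. Qed.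
Lemma tensrE A u k : tensr A u k = A k.1.1 k.1.2 * u 0 k.2. Proof. by rewrite ffunE. Qed.
Lemma flip12E f k : flip12 f k = f ((k.1.2, k.1.1), k.2). Proof. by rewrite ffunE. Qed.
Lemma swap23E f k : swap23 f k = f ((k.1.1, k.2), k.1.2). Proof. by rewrite ffunE. Qed.
Lemma cycle3E f k : cycle3 f k = f ((k.2, k.1.1), k.1.2). Proof. by rewrite ffunE. Qed.
Lemma mx_addE A B i j : (A + B) i j = A i j + B i j. Proof. by rewrite mxE. Qed.
Lemma mx_oppE A i j : (- A) i j = - A i j. Proof. by rewrite mxE. Qed.
Lemma row_addE u v i : (u + v) 0 i = u 0 i + v 0 i. Proof. by rewrite mxE. Qed.
Lemma row_oppE u i : (- u) 0 i = - u 0 i. Proof. by rewrite mxE. Qed.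
Lemma tens2E u v i j : tens2 u v i j = u 0 i * v 0 j. Proof. by rewrite mxE. Qed.
End Coordinates.

Section RWeightedSums.
Variables (F : fieldType) (n : nat) (r : 'M[F]_n).
Local Notation V := 'rV[F]_n.
Local Notation T2 := 'M[F]_n.
Local Notation T3 := {ffun 'I_n * 'I_n * 'I_n -> F}.
Local Notation e := (ebase F).

Definition rsum2 (W : lmodType F) (Phi : V -> V -> W) : W :=
  \sum_(p < n) \sum_(q < n) r p q *: Phi (e p) (e q).

Definition rsum4 (Psi : V -> V -> V -> V -> T3) : T3 :=
  \sum_(p < n) \sum_(q < n) \sum_(s < n) \sum_(t < n)
    scale3 (r p q * r s t) (Psi (e p) (e q) (e s) (e t)).

Section Rsum2.
Variable W : lmodType F.
Implicit Types Phi Psi : V -> V -> W.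

Lemma eq_rsum2 Phi Psi : (forall u v, Phi u v = Psi u v) -> rsum2 Phi = rsum2 Psi.
Proof. by move=> PhiE; apply: eq_bigr => i _; apply: eq_bigr => j _; rewrite PhiE. Qed.

Lemma rsum2D Phi Psi : rsum2 Phi + rsum2 Psi = rsum2 (fun u v => Phi u v + Psi u v).
Proof.
rewrite /rsum2 -big_split; apply: eq_bigr => i _; rewrite -big_split.
by apply: eq_bigr => j _; rewrite scalerDr.
Qed.

Lemma rsum2N Phi : - rsum2 Phi = rsum2 (fun u v => - Phi u v).
Proof.
rewrite /rsum2 -sumrN; apply: eq_bigr => i _; rewrite -sumrN.
by apply: eq_bigr => j _; rewrite scalerN.
Qed.

Lemma linear_rsum2 (W' : lmodType F) (M : {linear W -> W'}) Phi :
  M (rsum2 Phi) = rsum2 (fun u v => M (Phi u v)).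
Proof.
rewrite /rsum2 linear_sum; apply: eq_bigr => i _.
by rewrite linear_sum; apply: eq_bigr => j _; rewrite linearZ.
Qed.

Lemma rsum2_linear (Phi : V -> V -> V -> W) :
  (forall u v, linear (fun x => Phi x u v)) -> linear (fun x => rsum2 (Phi x)).
Proof.
move=> lin_Phi c x y; rewrite /rsum2 scaler_sumr -big_split; apply: eq_bigr => i _.
rewrite scaler_sumr -big_split; apply: eq_bigr => j _.
by rewrite lin_Phi scalerDr !scalerA mulrC.
Qed.
End Rsum2.

Lemma tmap_rE (f g : V -> V) : tmap f g r = rsum2 (fun u v => tens2 (f u) (g v)).
Proof. by []. Qed.

Lemma tmap_rsum2 (f g : V -> V) (Phi : V -> V -> T2) :
  tmap f g (rsum2 Phi) = rsum2 (fun u v => tmap f g (Phi u v)).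
Proof. exact: linear_rsum2. Qed.

Lemma flip_rsum2 (Phi : V -> V -> T2) : flip (rsum2 Phi) = rsum2 (fun u v => flip (Phi u v)).
Proof. exact: linear_rsum2. Qed.

Lemma eq_rsum4 Phi Psi :
  (forall p q s t, Phi p q s t = Psi p q s t) -> rsum4 Phi = rsum4 Psi.
Proof. by move=> PhiE; do 4!(apply: eq_bigr => ? _); rewrite PhiE. Qed.

Lemma rsum4D Phi Psi :
  rsum4 Phi + rsum4 Psi = rsum4 (fun p q s t => Phi p q s t + Psi p q s t).
Proof.
rewrite /rsum4 -big_split; apply: eq_bigr => p _; rewrite -big_split.
apply: eq_bigr => q _; rewrite -big_split; apply: eq_bigr => s _; rewrite -big_split.
by apply: eq_bigr => t _; apply/ffunP => k; rewrite !ffunE mulrDr.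
Qed.

Lemma rsum4N Psi : - rsum4 Psi = rsum4 (fun p q s t => - Psi p q s t).
Proof.
rewrite /rsum4 -sumrN; apply: eq_bigr => p _; rewrite -sumrN.
apply: eq_bigr => q _; rewrite -sumrN; apply: eq_bigr => s _; rewrite -sumrN.
by apply: eq_bigr => t _; apply/ffunP => k; rewrite !ffunE mulrN.
Qed.

Lemma linear3_rsum4 (M : T3 -> T3) Psi : linear3 M ->
  M (rsum4 Psi) = rsum4 (fun p q s t => M (Psi p q s t)).
Proof.
move=> lin_M; have M_sum I (s : seq I) (P : pred I) (G : I -> T3) :
    M (\sum_(i <- s | P i) G i) = \sum_(i <- s | P i) M (G i).
  exact: (big_morph M (linear3D lin_M) (linear3_0 lin_M)).
rewrite /rsum4 M_sum; apply: eq_bigr => p _; rewrite M_sum; apply: eq_bigr => q _.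
rewrite M_sum; apply: eq_bigr => s _; rewrite M_sum; apply: eq_bigr => t _.
by rewrite -[scale3 _ _]addr0 lin_M linear3_0 // !addr0.
Qed.

Lemma tmap3_rsum4 f g h Psi :
  tmap3 f g h (rsum4 Psi) = rsum4 (fun p q s t => tmap3 f g h (Psi p q s t)).
Proof. exact/linear3_rsum4/tmap3_linear3. Qed.

Lemma flip12_rsum4 Psi : flip12 (rsum4 Psi) = rsum4 (fun p q s t => flip12 (Psi p q s t)).
Proof. exact/linear3_rsum4/flip12_linear3. Qed.

Lemma swap23_rsum4 Psi : swap23 (rsum4 Psi) = rsum4 (fun p q s t => swap23 (Psi p q s t)).
Proof. exact/linear3_rsum4/swap23_linear3. Qed.

Lemma cycle3_rsum4 Psi : cycle3 (rsum4 Psi) = rsum4 (fun p q s t => cycle3 (Psi p q s t)).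
Proof. exact/linear3_rsum4/cycle3_linear3. Qed.

Lemma exchange_big_pairs (G : 'I_n -> 'I_n -> 'I_n -> 'I_n -> F) :
  \sum_i \sum_j \sum_s \sum_u G i j s u = \sum_s \sum_u \sum_i \sum_j G i j s u.
Proof.
rewrite pair_big [RHS]pair_big; under eq_bigr do rewrite pair_big.
by under [RHS]eq_bigr do rewrite pair_big; rewrite exchange_big.
Qed.

Lemma id_tens_rsum2_map (d : V -> T2) (Theta : V -> V -> V -> T2) (t : T2) :
  (forall w, d w = rsum2 (Theta w)) ->
  id_tens d t = \sum_s \sum_u scale3 (r s u) (id_tens (fun w => Theta w (e s) (e u)) t).
Proof.
move=> dE; apply/ffunP => k; rewrite /id_tens !sum_ffunE.
under eq_bigr => i _ do rewrite sum_ffunE.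
under eq_bigr => i _ do under eq_bigr => j _ do
  rewrite !ffunE dE /rsum2 !summxE big_distrr big_distrr /=.
under eq_bigr => i _ do under eq_bigr => j _ do under eq_bigr => s _ do
  rewrite summxE big_distrr big_distrr /=.
under [RHS]eq_bigr => s _ do rewrite sum_ffunE.
under [RHS]eq_bigr => s _ do under eq_bigr => u _ do
  rewrite ffunE sum_ffunE big_distrr /=.
under [RHS]eq_bigr => s _ do under eq_bigr => u _ do under eq_bigr => i _ do
  rewrite sum_ffunE big_distrr /=.
rewrite exchange_big_pairs; do 4!(apply: eq_bigr => ? _).
by rewrite !ffunE !mxE; ring.
Qed.

Lemma tens_id_rsum2_map (d : V -> T2) (Theta : V -> V -> V -> T2) (t : T2) :
  (forall w, d w = rsum2 (Theta w)) ->
  tens_id d t = \sum_s \sum_u scale3 (r s u) (tens_id (fun w => Theta w (e s) (e u)) t).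
Proof.
move=> dE; apply/ffunP => k; rewrite /tens_id !sum_ffunE.
under eq_bigr => i _ do rewrite sum_ffunE.
under eq_bigr => i _ do under eq_bigr => j _ do
  rewrite !ffunE dE /rsum2 !summxE big_distrl big_distrr /=.
under eq_bigr => i _ do under eq_bigr => j _ do under eq_bigr => s _ do
  rewrite summxE big_distrl big_distrr /=.
under [RHS]eq_bigr => s _ do rewrite sum_ffunE.
under [RHS]eq_bigr => s _ do under eq_bigr => u _ do
  rewrite ffunE sum_ffunE big_distrr /=.
under [RHS]eq_bigr => s _ do under eq_bigr => u _ do under eq_bigr => i _ do
  rewrite sum_ffunE big_distrr /=.
rewrite exchange_big_pairs; do 4!(apply: eq_bigr => ? _).
by rewrite !ffunE !mxE; ring.
Qed.

Lemma id_tens_rsum2 (d : V -> T2) (Theta : V -> V -> V -> T2) (Phi : V -> V -> T2) :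
  (forall w, d w = rsum2 (Theta w)) ->
  id_tens d (rsum2 Phi) = rsum4 (fun p q s t => id_tens (fun w => Theta w s t) (Phi p q)).
Proof.
move=> dE; rewrite /rsum2 raddf_sum; apply: eq_bigr => p _; rewrite raddf_sum.
apply: eq_bigr => q _; rewrite /= id_tensZ (id_tens_rsum2_map _ dE) scale3_sumr.
apply: eq_bigr => s _; rewrite scale3_sumr; apply: eq_bigr => t _.
by rewrite scale3A.
Qed.

Lemma tens_id_rsum2 (d : V -> T2) (Theta : V -> V -> V -> T2) (Phi : V -> V -> T2) :
  (forall w, d w = rsum2 (Theta w)) ->
  tens_id d (rsum2 Phi) = rsum4 (fun p q s t => tens_id (fun w => Theta w s t) (Phi p q)).
Proof.
move=> dE; rewrite /rsum2 raddf_sum; apply: eq_bigr => p _; rewrite raddf_sum.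
apply: eq_bigr => q _; rewrite /= tens_idZ (tens_id_rsum2_map _ dE) scale3_sumr.
apply: eq_bigr => s _; rewrite scale3_sumr; apply: eq_bigr => t _.
by rewrite scale3A.
Qed.

Section Symmetric.
Hypothesis r_sym : flip r = r.
Hypothesis two_neq0 : 2%:R != 0 :> F.

Lemma rsym i j : r j i = r i j.
Proof. by rewrite -[in RHS]r_sym mxE. Qed.

Lemma rsum2_sym (W : lmodType F) (Phi Psi : V -> V -> W) :
  (forall u v, Phi u v + Phi v u = Psi u v + Psi v u) -> rsum2 Phi = rsum2 Psi.
Proof.
have swap (G : V -> V -> W) : rsum2 G = rsum2 (fun u v => G v u).
  rewrite /rsum2 exchange_big; apply: eq_bigr => i _.
  by apply: eq_bigr => j _; rewrite rsym.
move=> sym_eq; apply: (scalerI two_neq0); rewrite !scaler_nat !mulr2n.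
by rewrite {2}swap [X in _ = _ + X]swap !rsum2D; apply: eq_rsum2.
Qed.

Lemma rsum4_swap12 Psi : rsum4 Psi = rsum4 (fun p q s t => Psi q p s t).
Proof.
rewrite /rsum4 exchange_big; apply: eq_bigr => a _; apply: eq_bigr => b _.
by do 2!(apply: eq_bigr => ? _); rewrite [r b a]rsym.
Qed.

Lemma rsum4_swap34 Psi : rsum4 Psi = rsum4 (fun p q s t => Psi p q t s).
Proof.
apply: eq_bigr => p _; apply: eq_bigr => q _; rewrite exchange_big.
by apply: eq_bigr => a _; apply: eq_bigr => b _; rewrite [r b a]rsym.
Qed.

Lemma rsum4_swap_pairs Psi : rsum4 Psi = rsum4 (fun p q s t => Psi s t p q).
Proof.
rewrite /rsum4 pair_big [RHS]pair_big; under eq_bigr do rewrite pair_big.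
under [RHS]eq_bigr do rewrite pair_big.
by rewrite exchange_big; do 2!(apply: eq_bigr => ? _); rewrite mulrC.
Qed.

Lemma rsum4_sym Phi Psi :
  (forall p q s t, Phi p q s t + Phi s t p q + (Phi p q t s + Phi t s p q)
      + (Phi q p s t + Phi s t q p + (Phi q p t s + Phi t s q p))
    = Psi p q s t + Psi s t p q + (Psi p q t s + Psi t s p q)
      + (Psi q p s t + Psi s t q p + (Psi q p t s + Psi t s q p))) ->
  rsum4 Phi = rsum4 Psi.
Proof.
have orbit_sum G : rsum4 (fun p q s t =>
      G p q s t + G s t p q + (G p q t s + G t s p q)
      + (G q p s t + G s t q p + (G q p t s + G t s q p))) = rsum4 G *+ 8.
  pose G1 p q s t := G p q s t + G s t p q.
  pose G2 p q s t := G1 p q s t + G1 p q t s.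
  rewrite -(rsum4D G2 (fun p q s t => G2 q p s t)) -(rsum4_swap12 G2) -mulr2n /G2.
  rewrite -(rsum4D G1 (fun p q s t => G1 p q t s)) -(rsum4_swap34 G1) -mulr2n /G1.
  rewrite -(rsum4D G (fun p q s t => G s t p q)) -(rsum4_swap_pairs G) -mulr2n.
  by rewrite -!mulrnA.
move=> PhiPsi; have := orbit_sum Phi; rewrite (eq_rsum4 PhiPsi) orbit_sum => e8.
have eight_neq0 : 8%:R != 0 :> F by rewrite (natrM F 2 4) (natrM F 2 2) !mulf_neq0.
apply/ffunP => k; move/ffunP/(_ k): e8.
rewrite (ffunMnE (rsum4 Psi)) (ffunMnE (rsum4 Phi)).
by rewrite -(mulr_natr (rsum4 Psi k)) -(mulr_natr (rsum4 Phi k)) => /(mulIf eight_neq0).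
Qed.

Lemma rsum2_sym_coord (Phi Psi : V -> V -> T2) (f g : V -> V -> 'I_n -> 'I_n -> F) :
  (forall p q i j, Phi p q i j = f p q i j) -> (forall p q i j, Psi p q i j = g p q i j) ->
  (forall p q i j, f p q i j + f q p i j = g p q i j + g q p i j) ->
  rsum2 Phi = rsum2 Psi.
Proof.
move=> PhiE PsiE fg; apply: rsum2_sym => p q; apply/matrixP => i j.
by rewrite !mx_addE !PhiE !PsiE.
Qed.

Lemma rsum4_sym_coord (Phi Psi : V -> V -> V -> V -> T3)
    (f g : V -> V -> V -> V -> 'I_n * 'I_n * 'I_n -> F) :
  (forall p q s t k, Phi p q s t k = f p q s t k) ->
  (forall p q s t k, Psi p q s t k = g p q s t k) ->
  (forall p q s t k, f p q s t k + f s t p q k + (f p q t s k + f t s p q k)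
      + (f q p s t k + f s t q p k + (f q p t s k + f t s q p k))
    = g p q s t k + g s t p q k + (g p q t s k + g t s p q k)
      + (g q p s t k + g s t q p k + (g q p t s k + g t s q p k))) ->
  rsum4 Phi = rsum4 Psi.
Proof.
move=> PhiE PsiE fg; apply: rsum4_sym => p q s t; apply/ffunP => k.
by rewrite !ffun_addE !PhiE !PsiE.
Qed.
End Symmetric.
End RWeightedSums.

Section BilinearOperations.
Variables (F : fieldType) (n : nat) (op : 'rV[F]_n -> 'rV[F]_n -> 'rV[F]_n).
Hypothesis op_bilinear : bilinear_op op.

Lemma Lop_linear x : linear (Lop op x).
Proof. by move=> c u v; rewrite /Lop op_bilinear.2. Qed.
Lemma Rop_linear x : linear (Rop op x).
Proof. by move=> c u v; rewrite /Rop op_bilinear.1. Qed.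

Let Lop_lin x : {linear 'rV[F]_n -> 'rV[F]_n} :=
  HB.pack (Lop op x) (GRing.isLinear.Build _ _ _ _ _ (Lop_linear x)).
Let Rop_lin x : {linear 'rV[F]_n -> 'rV[F]_n} :=
  HB.pack (Rop op x) (GRing.isLinear.Build _ _ _ _ _ (Rop_linear x)).

Lemma opDl x y z : op (x + y) z = op x z + op y z. Proof. exact: (linearD (Rop_lin z) x y). Qed.
Lemma opDr x y z : op z (x + y) = op z x + op z y. Proof. exact: (linearD (Lop_lin z) x y). Qed.
Lemma opNl x z : op (- x) z = - op x z. Proof. exact: (linearN (Rop_lin z) x). Qed.
Lemma opNr x z : op z (- x) = - op z x. Proof. exact: (linearN (Lop_lin z) x). Qed.
Lemma opZl c x z : op (c *: x) z = c *: op x z. Proof. exact: (linearZZ (Rop_lin z) c x). Qed.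
Lemma opZr c x z : op z (c *: x) = c *: op z x. Proof. exact: (linearZZ (Lop_lin z) c x). Qed.

Lemma bsq_bilinear : bilinear_op (bsq op).
Proof.
by split=> c x y z; rewrite /bsq opDl opDr opZl opZr scalerBr opprD addrACA.
Qed.

Lemma wsq_bilinear : bilinear_op (wsq op).
Proof.
by split=> c x y z; rewrite /wsq opDl opDr opZl opZr scalerDr addrACA.
Qed.
End BilinearOperations.

Section DualPrePoissonBialgebra.
Variables (F : fieldType) (n : nat) (mul br : 'rV[F]_n -> 'rV[F]_n -> 'rV[F]_n).
Local Notation V := 'rV[F]_n.
Local Notation T2 := 'M[F]_n.
Local Notation T3 := {ffun 'I_n * 'I_n * 'I_n -> F}.
Local Notation idV := (fun v : V => v).
Hypothesis dpp : dual_pre_poisson mul br.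

Lemma mul_bilinear : bilinear_op mul. Proof. by case: dpp. Qed.
Lemma br_bilinear : bilinear_op br. Proof. by case: dpp => _ []. Qed.
Lemma mulA x y z : mul x (mul y z) = mul (mul x y) z.
Proof. by case: dpp => _ [_ [/(_ x y z) []]]. Qed.
Lemma mulAC x y z : mul (mul x y) z = mul (mul y x) z.
Proof. by case: dpp => _ [_ [/(_ x y z) []]]. Qed.
Lemma br_brl x y z : br (br x y) z = br x (br y z) - br y (br x z).
Proof. by case: dpp => _ [_ [_ leibniz _ _ _]]; rewrite leibniz addrK. Qed.
Lemma br_mulr x y z : br x (mul y z) = mul (br x y) z + mul y (br x z).
Proof. by case: dpp => _ [_ []]. Qed.
Lemma br_mull x y z : br (mul x y) z = mul x (br y z) + mul y (br x z).
Proof. by case: dpp => _ [_ []]. Qed.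
Lemma mul_br_skew x y z : mul (br x y) z = - mul (br y x) z.
Proof. by case: dpp => _ [_ []]. Qed.

(* Modulo the axioms, a multilinear monomial of degree 3 is a unique combination of
   (a b) c with a < b, a [b, c], [a, b] c with a < b and [a, [b, c]].  [dpp_reduce]
   applies the order-free rules and [dpp_sort vs] the two rules depending on the
   order [vs] of the variables; [ring] then decides identities of degree 3. *)
Ltac precedes a b vs :=
  lazymatch vs with
  | ?h :: ?tl => tryif constr_eq h a then idtac
                 else tryif constr_eq h b then fail else precedes a b tl
  end.

Ltac dpp_distribute :=
  rewrite ?(opDl mul_bilinear) ?(opDr mul_bilinear) ?(opNl mul_bilinear)
          ?(opNr mul_bilinear) ?(opDl br_bilinear) ?(opDr br_bilinear)
          ?(opNl br_bilinear) ?(opNr br_bilinear).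

Ltac dpp_reduce :=
  rewrite /bsq /wsq /Lop /Rop; dpp_distribute;
  repeat progress (rewrite ?mulA ?br_brl ?br_mulr ?br_mull; dpp_distribute).

Ltac dpp_sort vs :=
  repeat match goal with
  | |- context [mul (mul ?b ?a) ?c] => precedes a b vs; rewrite (mulAC b a c)
  | |- context [mul (br ?b ?a) ?c] => precedes a b vs; rewrite (mul_br_skew b a c)
  end.

Definition delta_circ_summand (x p q : V) : T2 :=
  tens2 (bsq mul p x) q + tens2 p (mul q x).
Definition delta_br_summand (x p q : V) : T2 :=
  tens2 (wsq br x p) q - tens2 p (br q x).

Lemma delta_circ_summandE x p q :
  delta_circ_summand x p q = tens2 (bsq mul p x) q + tens2 p (mul q x).
Proof. by []. Qed.

Lemma delta_br_summandE x p q :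
  delta_br_summand x p q = tens2 (wsq br x p) q - tens2 p (br q x).
Proof. by []. Qed.

Lemma delta_circ_summand_linear p q : linear (fun x => delta_circ_summand x p q).
Proof.
move=> c u v; apply/matrixP => i j; rewrite /delta_circ_summand /bsq.
rewrite !(opDl mul_bilinear) !(opDr mul_bilinear) !(opZl mul_bilinear).
by rewrite !(opZr mul_bilinear) !mxE; ring.
Qed.

Lemma delta_br_summand_linear p q : linear (fun x => delta_br_summand x p q).
Proof.
move=> c u v; apply/matrixP => i j; rewrite /delta_br_summand /wsq.
rewrite !(opDl br_bilinear) !(opDr br_bilinear) !(opZl br_bilinear).
by rewrite !(opZr br_bilinear) !mxE; ring.
Qed.

Section RMatrix.
Variable r : T2.
Local Notation dc := (delta_circ_r mul r).
Local Notation db := (delta_br_r br r).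
Local Notation P := (PLYBE_P mul r).
Local Notation L := (PLYBE_L br r).

Lemma delta_circ_rE x : dc x = rsum2 r (delta_circ_summand x).
Proof. by rewrite /delta_circ_r !tmap_rE rsum2D. Qed.

Lemma delta_br_rE x : db x = rsum2 r (delta_br_summand x).
Proof. by rewrite /delta_br_r !tmap_rE rsum2N rsum2D. Qed.

Lemma delta_circ_r_linear : linear dc.
Proof.
move=> c x y; rewrite !delta_circ_rE.
exact: (rsum2_linear r delta_circ_summand_linear).
Qed.

Lemma delta_br_r_linear : linear db.
Proof.
move=> c x y; rewrite !delta_br_rE.
exact: (rsum2_linear r delta_br_summand_linear).
Qed.

Lemma PLYBE_PE : P = rsum4 r (fun p q s t =>
  tens3 p s (mul q t) - tens3 p (mul q s) t + tens3 (bsq mul p s) t q).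
Proof. by []. Qed.

Lemma PLYBE_LE : L = rsum4 r (fun p q s t =>
  tens3 p s (br q t) + tens3 p (br q s) t - tens3 (wsq br p s) q t).
Proof. by []. Qed.

Ltac solve_bilinear := first [ exact: mul_bilinear | exact: br_bilinear
  | exact: (bsq_bilinear mul_bilinear) | exact: (wsq_bilinear br_bilinear) ].

Ltac solve_linear :=
  lazymatch goal with
  | |- linear (Lop _ _) => apply: Lop_linear; solve_bilinear
  | |- linear (Rop _ _) => apply: Rop_linear; solve_bilinear
  | |- linear _ => first [ by [] | exact: delta_circ_summand_linear
                         | exact: delta_br_summand_linear ]
  end.

Ltac rsum2_collect :=
  rewrite ?delta_circ_rE ?delta_br_rE;
  rewrite ?(tmap_rsum2, flip_rsum2, rsum2N, rsum2D).

Ltac rsum4_collect :=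
  rewrite ?delta_circ_rE ?delta_br_rE;
  rewrite ?(id_tens_rsum2 _ delta_circ_rE) ?(id_tens_rsum2 _ delta_br_rE);
  rewrite ?(tens_id_rsum2 _ delta_circ_rE) ?(tens_id_rsum2 _ delta_br_rE);
  rewrite ?PLYBE_PE ?PLYBE_LE;
  rewrite ?(tmap3_rsum4, flip12_rsum4, swap23_rsum4, cycle3_rsum4, rsum4N, rsum4D).

Ltac coordinates :=
  rewrite ?delta_circ_summandE ?delta_br_summandE;
  rewrite ?(tmapD, tmapN, flipD, flipN, flip_tens2, id_tensD, id_tensN, tens_idD, tens_idN,
            tmap3D, tmap3N);
  rewrite ?tmap_tens2 ?id_tens_tens2 ?tens_id_tens2 ?tmap3_tens3; try solve_linear;
  cbv beta; rewrite ?delta_circ_summandE ?delta_br_summandE; dpp_reduce;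
  rewrite ?(ffun_addE, ffun_oppE, tens3E, tenslE, tensrE, flip12E, swap23E, cycle3E);
  cbn [fst snd]; rewrite ?(mx_addE, mx_oppE, tens2E); rewrite ?(row_addE, row_oppE).

(* The order-dependent rules are applied only after symmetrisation, which permutes
   the variables. *)
Ltac close2 x y :=
  let p := fresh "p" in let q := fresh "q" in
  intros p q ? ?; cbv beta; dpp_sort constr:([:: p; q; x; y]);
  rewrite ?(row_addE, row_oppE); ring.

Ltac close4 x :=
  let p := fresh "p" in let q := fresh "q" in let s := fresh "s" in let t := fresh "t" in
  intros p q s t ?; cbv beta; dpp_sort constr:([:: p; q; s; t; x]);
  rewrite ?(row_addE, row_oppE); ring.

Section Symmetric.
Hypothesis r_sym : flip r = r.
Hypothesis two_neq0 : 2%:R != 0 :> F.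
Local Notation dbs x := (dc x - flip (dc x)).
Local Notation dws x := (db x + flip (db x)).

Ltac compatibility x y :=
  rsum2_collect; eapply (rsum2_sym_coord r_sym two_neq0);
  [ intros; coordinates; reflexivity | intros; coordinates; reflexivity | close2 x y ].

Lemma compatibility1 x y :
  dc (mul x y) = tmap (Lop (bsq mul) x) idV (dc y) + tmap idV (Rop mul y) (dc x).
Proof. by compatibility x y. Qed.

Lemma compatibility2 x y :
  tmap idV (Rop mul x) (flip (dc y)) = tmap (Rop mul y) idV (dc x).
Proof. by compatibility x y. Qed.

Lemma compatibility3 x y :
  dc (mul x y) = tmap (Lop (bsq mul) y) idV (dbs x) + tmap idV (Lop mul x) (dc y).
Proof. by compatibility x y. Qed.

Lemma compatibility4 x y :
  tmap idV (Rop br x) (flip (db y)) = tmap (Rop br y) idV (db x).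
Proof. by compatibility x y. Qed.

Lemma compatibility5 x y :
  db (br x y) = tmap idV (Rop br y) (dws x) - tmap (Lop (wsq br) y) idV (dws x)
                + (tmap idV (Lop br x) (db y) + tmap (Lop br x) idV (db y)).
Proof. by compatibility x y. Qed.

Lemma compatibility6 x y :
  dc (br x y) = tmap idV (Lop br x) (dc y) + tmap (Lop br x) idV (dc y)
                + (tmap (Lop (bsq mul) y) idV (dws x) - tmap idV (Rop mul y) (dws x)).
Proof. by compatibility x y. Qed.

Lemma compatibility7 x y :
  db (mul x y) = tmap idV (Lop mul x) (db y) + tmap idV (Rop mul y) (db x)
                 - tmap (Lop (wsq br) x) idV (dc y) - tmap (Lop (wsq br) y) idV (dbs x).
Proof. by compatibility x y. Qed.

Lemma compatibility8 x y :
  tmap idV (Rop br x) (flip (dc y)) = - tmap (Rop mul y) idV (db x).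
Proof. by compatibility x y. Qed.

Lemma compatibility9 x y :
  dc (br x y) = tmap idV (Lop mul x) (db y) - tmap (Lop mul x) idV (db y)
                + (tmap idV (Rop br y) (dbs x) - tmap (Lop (wsq br) y) idV (dbs x)).
Proof. by compatibility x y. Qed.

Lemma compatibility10 x y :
  dws (mul x y) = tmap idV (Lop mul x) (dws y) + tmap idV (Lop mul y) (dws x)
                  - tmap (Lop br x) idV (dbs y) - tmap (Lop br y) idV (dbs x).
Proof. by compatibility x y. Qed.

Lemma compatibility11 x y :
  db (mul x y) = tmap (Lop mul x) idV (db y) - tmap idV (Rop br y) (dbs x)
                 + tmap idV (Lop br x) (dc y) - tmap (Rop (bsq mul) y) idV (dws x).
Proof. by compatibility x y. Qed.

Lemma compatibility12 x y :
  dc (wsq br x y) = tmap idV (Lop (wsq br) x) (dc y)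
                    + tmap (Lop (wsq br) x) idV (flip (dc y))
                    - tmap idV (Rop (bsq mul) y) (db x)
                    - tmap (Rop (bsq mul) y) idV (flip (db x)).
Proof. by compatibility x y. Qed.

Ltac coalgebra_defect x :=
  rsum4_collect; eapply (rsum4_sym_coord r_sym two_neq0);
  [ intros; coordinates; reflexivity | intros; coordinates; reflexivity | close4 x ].

Lemma comulA_defect x :
  id_tens dc (dc x) - tens_id dc (dc x) =
  flip12 (tmap3 idV (Rop mul x) idV P) - swap23 (tmap3 idV (Rop mul x) idV P)
  - flip12 (tmap3 idV (Lop mul x) idV P).
Proof. by coalgebra_defect x. Qed.

Lemma comulAC_defect x :
  tens_id dc (dc x) - flip12 (tens_id dc (dc x)) = cycle3 (tmap3 (Rop mul x) idV idV P).
Proof. by coalgebra_defect x. Qed.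

Lemma cobr_leibniz_defect x :
  id_tens db (db x) - (tens_id db (db x) + flip12 (id_tens db (db x))) =
  - flip12 (tmap3 idV (Rop br x) idV L) - swap23 (tmap3 idV (Rop br x) idV L)
  + tmap3 idV (Lop br x) idV L + tmap3 idV (Rop br x) idV L
  - flip12 (tmap3 idV (Lop br x) idV L).
Proof. by coalgebra_defect x. Qed.

Lemma cobr_mulr_defect x :
  id_tens dc (db x) - (tens_id db (dc x) + flip12 (id_tens db (dc x))) =
  flip12 (tmap3 idV (Rop br x) idV P) + swap23 (tmap3 idV (Rop mul x) idV L)
  + tmap3 idV (Rop mul x) idV L - tmap3 idV (Lop mul x) idV L
  + flip12 (tmap3 idV (Lop br x) idV P).
Proof. by coalgebra_defect x. Qed.

Lemma cobr_mull_defect x :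
  tens_id dc (db x) - (id_tens db (dc x) + flip12 (id_tens db (dc x))) =
  flip12 (tmap3 idV (Rop mul x) idV L) - swap23 (tmap3 idV (Rop br x) idV P)
  + tmap3 idV (Rop mul x) idV L - tmap3 idV (Lop mul x) idV L
  - flip12 (tmap3 idV (Lop mul x) idV L).
Proof. by coalgebra_defect x. Qed.

Lemma comul_br_skew_defect x :
  tens_id db (dc x) + flip12 (tens_id db (dc x)) = cycle3 (tmap3 (Rop mul x) idV idV L).
Proof. by coalgebra_defect x. Qed.

Lemma PLYBE_solution_bialgebra : PLYBE_solution mul br r -> dpp_bialgebra mul br dc db.
Proof.
case=> P0 L0; have tmap3_0 f g h : tmap3 f g h 0 = 0 := linear3_0 (tmap3_linear3 f g h).
have [flip12_0 swap23_0 cycle3_0] : [/\ flip12 0 = 0 :> T3, swap23 0 = 0 :> T3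
    & cycle3 0 = 0 :> T3] by split; apply/ffunP => k; rewrite !ffunE.
rewrite /dpp_bialgebra /=; split; first exact: dpp.
split; first exact: delta_circ_r_linear.
split; first exact: delta_br_r_linear.
have vanish := (P0, L0, tmap3_0, flip12_0, swap23_0, cycle3_0, oppr0, addr0, subr0).
split; first split=> x; first split.
- by apply/eqP; rewrite -subr_eq0 comulA_defect !vanish.
- by apply/eqP; rewrite -subr_eq0 comulAC_defect !vanish.
- by apply/eqP; rewrite -subr_eq0 cobr_leibniz_defect !vanish.
- by apply/eqP; rewrite -subr_eq0 cobr_mulr_defect !vanish.
- by apply/eqP; rewrite -subr_eq0 cobr_mull_defect !vanish.
- by apply/eqP; rewrite -addr_eq0 comul_br_skew_defect !vanish.
- by do !split; [ exact: compatibility1 | exact: compatibility2 | exact: compatibility3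
  | exact: compatibility4 | exact: compatibility5 | exact: compatibility6
  | exact: compatibility7 | exact: compatibility8 | exact: compatibility9
  | exact: compatibility10 | exact: compatibility11 | exact: compatibility12 ].
Qed.
End Symmetric.
End RMatrix.
End DualPrePoissonBialgebra.

Theorem theorem3p15 (F : fieldType) (n : nat)
    (mul br : 'rV[F]_n -> 'rV[F]_n -> 'rV[F]_n) (r : 'M[F]_n) :
  [pchar F] =i pred0 ->
  dual_pre_poisson mul br ->
  flip r = r ->
  PLYBE_solution mul br r ->
  dpp_bialgebra mul br (delta_circ_r mul r) (delta_br_r br r).
Proof.
move=> charF0 dpp r_sym; apply: PLYBE_solution_bialgebra => //.
by move/pcharf0P: charF0 => ->.
Qed.
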